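(* Let $\Omega$ be an infinite set, let $1\leq k<i\leq j$ be integers, and let $\Gamma=\Gamma^\Omega_{i,j;\geq k}$. Then for every positive integer $\ell$, every $\ell$-flower of $\Gamma$ is either a $j$-regular star, in which case $\ell=i-k$, or an $i$-regular star, in which case $\ell=j-k$; and both occur (every $j$-regular star is an $(i-k)$-flower and every $i$-regular star is a $(j-k)$-flower). Moreover, $\Gamma$ contains no $\ell$-star for any positive integer $\ell$.
   Context: $\Gamma^\Omega_{i,j;\geq k}$ is the bipartite graph with biparts the $i$-subsets and the $j$-subsets of $\Omega$ (two copies if $i=j$), an $i$-subset adjacent to a $j$-subset iff their intersection has at least $k$ elements. Let $\ell$ be a positive integer and let $\mathcal{A}$ be an infinite set of vertices in one bipart. $\mathcal{A}$ is an $\ell$-star if: (S1) every vertex $v$ of the other bipart is adjacent to exactly $\ell+1$ members of $\mathcal{A}$, or non-adjacent to exactly $\ell$ members of $\mathcal{A}$, or adjacent to no member of $\mathcal{A}$; (S2) for every $(\ell+1)$-subset $A\subset\mathcal{A}$ the number of vertices adjacent to every member of $A$ and to no member of $\mathcal{A}\setminus A$ is finite and nonzero; (S3) for every $\ell$-subset $B\subset\mathcal{A}$ the number of vertices adjacent to no member of $B$ and to every member of $\mathcal{A}\setminus B$ is finite and nonzero. $\mathcal{A}$ is an $\ell$-flower if: (F1) every vertex of the other bipart is adjacent to exactly $\ell+1$ members of $\mathcal{A}$, or to all members, or to none; (F2) as (S2); (F3) infinitely many vertices are adjacent to all members of $\mathcal{A}$. An $i$-regular star is the set of all $i$-subsets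 of $\Omega$ containing a fixed $(i-1)$-subset; a $j$-regular star is defined likewise. *)

From mathcomp Require Import all_boot.
From mathcomp Require Import finmap.
From mathcomp Require Import boolp classical_sets cardinality.

Set Implicit Arguments.
Unset Strict Implicit.
Unset Printing Implicit Defensive.

Local Open Scope classical_set_scope.
Local Open Scope card_scope.

Section Gamma.
Variable Omega : choiceType.

Definition nsubset (n : nat) : set {fset Omega} :=
  [set X | #|` X|%fset = n].

(* adjacency in Gamma_{i,j;>=k}: an i-subset X and a j-subset Y are
   adjacent iff |X \cap Y| >= k *)
Definition gadj (k : nat) (X Y : {fset Omega}) : Prop :=
  (k <= #|` fsetI X Y|%fset)%N.

Definition regular_star (n : nat) (A : set {fset Omega}) : Prop :=
  exists S : {fset Omega}, #|` S|%fset = n.-1 /\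
    A = [set X | #|` X|%fset = n /\ fsubset S X].
End Gamma.

Section StarFlower.
(* A generic bipartite graph: Apart is the bipart containing the family,
   Bpart the other bipart, adj a b the adjacency between them. *)
Variables (V W : Type) (Apart : set V) (Bpart : set W) (adj : V -> W -> Prop).

Definition adj_exactly (F : set V) (B : set V) : set W :=
  [set w | Bpart w /\ (forall a, B a -> adj a w) /\
           (forall a, F a -> ~ B a -> ~ adj a w)].

Definition nonadj_exactly (F : set V) (B : set V) : set W :=
  [set w | Bpart w /\ (forall a, B a -> ~ adj a w) /\
           (forall a, F a -> ~ B a -> adj a w)].

Definition is_star (l : nat) (F : set V) : Prop :=
  F `<=` Apart /\ infinite_set F /\
  (forall w, Bpart w ->
     [set a | F a /\ adj a w] #= `I_(l.+1) \/
     [set a | F a /\ ~ adj a w] #= `I_l \/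
     (forall a, F a -> ~ adj a w)) /\
  (forall B, B `<=` F -> B #= `I_(l.+1) ->
     finite_set (adj_exactly F B) /\ adj_exactly F B !=set0) /\
  (forall B, B `<=` F -> B #= `I_l ->
     finite_set (nonadj_exactly F B) /\ nonadj_exactly F B !=set0).

Definition is_flower (l : nat) (F : set V) : Prop :=
  F `<=` Apart /\ infinite_set F /\
  (forall w, Bpart w ->
     [set a | F a /\ adj a w] #= `I_(l.+1) \/
     (forall a, F a -> adj a w) \/
     (forall a, F a -> ~ adj a w)) /\
  (forall B, B `<=` F -> B #= `I_(l.+1) ->
     finite_set (adj_exactly F B) /\ adj_exactly F B !=set0) /\
  infinite_set [set w | Bpart w /\ forall a, F a -> adj a w].
End StarFlower.

(* Let A be a flower among the a-sets, the other bipart being the b-sets, k < b.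
   By (F1) a b-set adjacent to infinitely many members is adjacent to all of them; starting
   from a b-set adjacent to all members (F3) and deleting points chosen by pigeonhole (the
   deleted point is replaced by fresh ones), one finds k points common to all members.
   Let K be the set of all common points and K0 a (k-1)-subset of K. For Z outside K with
   #|Z| = b-k+1, the b-set K0 `|` Z is adjacent exactly to the members meeting Z, so by (F1)
   exactly l+1 members meet Z as soon as one does; in particular every point outside K lies
   in finitely many members. Comparing two such counts forces #|K| = a-1, hence A lies in
   the star centred at K, and counting the members meeting b-k+1 petals gives l = b-k and
   A equal to the whole star. Conversely a centred star is a (b-k)-flower by direct counting.
   An l-star cannot exist: if Y0 is the b-set of (S3) for an l-subset B, replacing a
   well-chosen point of Y0 by any fresh point yields infinitely many b-sets non-adjacent
   exactly to B. Adjacency being symmetric, everything applies to both biparts. *)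

From mathcomp Require Import all_boot.
From mathcomp Require Import finmap.
From mathcomp Require Import boolp classical_sets cardinality.
From mathcomp Require Import zify.

Set Implicit Arguments.
Unset Strict Implicit.
Unset Printing Implicit Defensive.

Local Open Scope classical_set_scope.
Local Open Scope card_scope.
Local Open Scope fset_scope.

Section FiniteSets.
Variable T : choiceType.
Implicit Types (X Y C S P Q R : {fset T}) (A B : set T).

Lemma exists_fsubset_card n S : (n <= #|` S|)%N ->
  exists2 W, W `<=` S & #|` W| = n.
Proof.
elim: n => [|n IHn] leS; first by exists fset0; rewrite ?fsub0set ?cardfs0.
have [W WS Wn] := IHn (ltnW leS).
have /fsubsetPn[x xS xW] : ~~ (S `<=` W).
  by apply: contraTN leS => /fsubset_leq_card; rewrite Wn -ltnNge.
by exists (x |` W); rewrite ?fsubUset ?fsub1set ?xS // cardfsU1 xW Wn.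
Qed.

Lemma infinite_set_fset_card n A : infinite_set A ->
  exists2 W : {fset T}, ([set` W] `<=` A)%classic & #|` W| = n.
Proof.
move=> /(infinite_set_fset n)[V VA /exists_fsubset_card[W WV Wn]].
by exists W => // x /= /(fsubsetP WV)/VA.
Qed.

Lemma card_eq_fset A n : A #= `I_n -> exists2 S : {fset T}, A = [set` S] & #|` S| = n.
Proof.
move=> An; have /finite_fsetP[S AS] : finite_set A by exists n.
by exists S => //; apply/card_eq_fsetP; rewrite -AS.
Qed.

Lemma card_eq_subset_eq A B n : (A `<=` B)%classic -> A #= `I_n -> B #= `I_n -> A = B.
Proof.
move=> AB /card_eq_fset[SA ASA SAn] /card_eq_fset[SB BSB SBn]; subst A B.
have sub : SA `<=` SB by apply/fsubsetP => x /AB.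
by have /eqP -> : SA == SB by rewrite -(fsubset_leqif_cards sub) SAn SBn.
Qed.

Lemma card_fsetU1I x S Y : x \notin S ->
  #|` (x |` S) `&` Y| = ((x \in Y) + #|` S `&` Y|)%N.
Proof.
move=> xS; case: (boolP (x \in Y)) => xY.
  have -> : (x |` S) `&` Y = x |` (S `&` Y).
    by apply/fsetP => w; rewrite !inE; case: eqVneq => // ->.
  by rewrite cardfsU1 inE (negbTE xS).
have -> // : (x |` S) `&` Y = S `&` Y.
by apply/fsetP => w; rewrite !inE; case: eqVneq => //= ->; rewrite (negbTE xY) andbF.
Qed.

Lemma card_fsetID1 y X C :
  #|` X `&` C| = (((y \in X) && (y \in C)) + #|` X `&` (C `\ y)|)%N.
Proof.
rewrite (cardfsD1 y (X `&` C)) in_fsetI; congr (_ + #|` _|)%N.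
by apply/fsetP => z; rewrite !inE; case: (z == y); rewrite ?andbF.
Qed.

Lemma card_fsetU_lt P Q R : P `&` Q != fset0 -> P `&` R = fset0 ->
  (#|` Q| <= #|` R|)%N -> (#|` P `|` Q| < #|` P `|` R|)%N.
Proof.
rewrite -cardfs_gt0 => PQ PR QR; have := cardfsUI P Q; have := cardfsUI P R.
by rewrite PR cardfs0; lia.
Qed.

End FiniteSets.

Section InfiniteType.
Variable T : choiceType.
Hypothesis Tinf : infinite_set [set: T].

Lemma fresh_fset n (E : set T) : finite_set E ->
  exists2 W : {fset T}, (forall x, x \in W -> ~ E x) & #|` W| = n.
Proof.
move=> fE; have [W WE Wn] := infinite_set_fset_card n (infinite_setD Tinf fE).
by exists W => // x /WE[].
Qed.

Lemma infinite_fsetU1 (C : {fset T}) (E : set T) (P : set {fset T}) :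
  finite_set E -> (forall z, z \notin C -> ~ E z -> P (z |` C)) -> infinite_set P.
Proof.
move=> fE CP Pfin.
have fCE : finite_set ([set` C] `|` E)%classic by rewrite finite_setU.
apply: (infinite_setD Tinf fCE).
pose add z := z |` C.
have add_inj : {in ([set: T] `\` ([set` C] `|` E))%classic &, injective add}.
  move=> z1 z2 /set_mem[_ z1CE] _ /(congr1 (fun S => z1 \in S)).
  rewrite !fsetU11 in_fset1U => /esym/orP[/eqP //|z1C].
  by case: z1CE; left.
rewrite -(eq_finite_set (inj_card_eq add_inj)).
by apply: sub_finite_set Pfin => _ [z [_ /not_orP[/negP zC zE]] <-]; apply: CP.
Qed.

Lemma fresh_fset_disjoint n (K : {fset T}) (M : set {fset T}) : finite_set M ->
  exists2 W : {fset T}, fdisjoint K W /\ #|` W| = n & forall X, M X -> fdisjoint X W.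
Proof.
move=> Mfin; pose E := ([set` K] `|` bigcup M (fun X => [set` X]))%classic.
have [W WE Wn] : exists2 W : {fset T}, (forall x, x \in W -> ~ E x) & #|` W| = n.
  by apply: fresh_fset; rewrite finite_setU; split => //; apply: bigcup_finite.
exists W; first by split => //; apply/fdisjointP => w wK; apply/negP => /WE; apply; left.
by move=> X MX; apply/fdisjointP => w wX; apply/negP => /WE; apply; right; exists X.
Qed.

End InfiniteType.

Lemma infinite_meet_fsetD1 (T : choiceType) k (H : set {fset T}) (C : {fset T}) :
  infinite_set H -> (forall X, H X -> (k <= #|` X `&` C|)%N) -> (k < #|` C|)%N ->
  exists2 y, y \in C & infinite_set [set X | H X /\ (k <= #|` X `&` (C `\ y)|)%N].
Proof.
move=> Hinf HC kC.
have cover : forall X, H X -> bigcup [set` C]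
               (fun y => [set X | H X /\ (k <= #|` X `&` (C `\ y)|)%N]) X.
  move=> X HX; suff [y yC yX] : exists2 y, y \in C & (k <= #|` X `&` (C `\ y)|)%N.
    by exists y.
  have [kX|Xk] := ltnP k #|` X `&` C|.
    have /fset0Pn[y yC] : C != fset0 by rewrite -cardfs_gt0; lia.
    by exists y => //; move: kX; rewrite (card_fsetID1 y); case: (_ && _) => /=; lia.
  have /fsubsetPn[y yC yX] : ~~ (C `<=` X).
    by apply: contraTN kC => /fsetIidPr CX; rewrite -leqNgt -CX.
  by exists y => //; move: (HC X HX); rewrite (card_fsetID1 y) (negbTE yX).
apply: contrapT => nE; apply/Hinf/(sub_finite_set cover)/bigcup_finite => // y yC.
by apply: contrapT => yinf; apply: nE; exists y.
Qed.

Section NoStar.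
Variable T : choiceType.
Hypothesis Tinf : infinite_set [set: T].
Variables (k b l : nat) (A : set {fset T}) (B : {fset {fset T}}) (Y0 : {fset T}).
Hypothesis kb : (k < b)%N.
Hypothesis Ainf : infinite_set A.
Hypothesis BA : ([set` B] `<=` A)%classic.
Hypothesis Bl : #|` B| = l.
Hypothesis S1 : forall Y, nsubset b Y ->
  [set X | A X /\ gadj k X Y] #= `I_(l.+1) \/
  [set X | A X /\ ~ gadj k X Y] #= `I_l \/ (forall X, A X -> ~ gadj k X Y).
Hypothesis Y0B : nonadj_exactly (@nsubset T b) (@gadj T k) A [set` B] Y0.

Lemma infinite_nonadj_exactly :
  infinite_set (nonadj_exactly (@nsubset T b) (@gadj T k) A [set` B]).
Proof.
have [Y0b [Y0nB Y0A]] := Y0B.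
have [y yY0 Ginf] : exists2 y, y \in Y0 &
    infinite_set [set X | (A `\` [set` B])%classic X /\ (k <= #|` X `&` (Y0 `\ y)|)%N].
  by apply: infinite_meet_fsetD1; [exact: infinite_setD|move=> X [] /Y0A|rewrite Y0b].
set G := [set X | _ /\ _] in Ginf.
pose E := ([set` Y0] `|` bigcup [set` B] (fun X => [set` X]))%classic.
have fE : finite_set E by rewrite finite_setU; split => //; apply: bigcup_finite.
apply: (infinite_fsetU1 Tinf (C := Y0 `\ y) fE) => z zY zE.
set Y := z |` _.
have zY0 : z \notin Y0 by apply/negP => zY0; apply: zE; left.
have Yb : nsubset b Y.
  by rewrite /nsubset /= cardfsU1 zY -Y0b (cardfsD1 y Y0) yY0.
have GY : forall X, G X -> gadj k X Y.
  move=> X [_ kX]; apply: leq_trans kX (fsubset_leq_card _).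
  by apply/fsubsetP => w; rewrite !inE => /andP[-> ->]; rewrite orbT.
have BY : forall X, [set` B] X -> ~ gadj k X Y.
  move=> X XB; apply: contra_not (Y0nB X XB) => /leq_trans; apply.
  apply/fsubset_leq_card/fsubsetP => w; rewrite !inE => /andP[wX /orP[/eqP wz|]].
    by case: zE; right; exists X => //; rewrite -wz.
  by move=> /andP[_ ->]; rewrite wX.
have [X0 GX0] := infinite_setN0 Ginf.
split=> //; split=> // X AX XB; apply: contrapT => XY.
have [Gfin|[NB|noadj]] := S1 Yb.
- apply/Ginf/(sub_finite_set _ (ex_intro _ l.+1 Gfin)).
  by move=> W GW; split; [exact: GW.1.1|exact: GY].
- apply: XB; suff -> : [set` B] = [set W | A W /\ ~ gadj k W Y] by [].
  apply: (card_eq_subset_eq _ _ NB); last exact/card_eq_fsetP.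
  by move=> W WB; split; [exact: BA|exact: BY].
- exact: noadj X0 GX0.1.1 (GY X0 GX0).
Qed.

End NoStar.

Lemma no_star (T : choiceType) (k b l : nat) (Apart A : set {fset T}) :
  infinite_set [set: T] -> (k < b)%N ->
  ~ is_star Apart (@nsubset T b) (@gadj T k) l A.
Proof.
move=> Tinf kb [_ [Ainf [S1 [_ S3]]]].
have [B BA Bl] := infinite_set_fset_card l Ainf.
have [Bfin [Y0 Y0B]] := S3 _ BA (introT card_eq_fsetP Bl).
exact: (infinite_nonadj_exactly Tinf kb Ainf BA Bl S1 Y0B).
Qed.

Definition centred_star (T : choiceType) (n : nat) (S : {fset T}) : set {fset T} :=
  [set X | #|` X| = n /\ S `<=` X].

Lemma fsetU1_injl (T : choiceType) (S : {fset T}) x y :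
  x \notin S -> x |` S = y |` S -> x = y.
Proof.
move=> xS /(congr1 (fun X => x \in X)); rewrite fsetU11 in_fset1U.
by move=> /esym/orP[/eqP //|xS']; rewrite xS' in xS.
Qed.

Lemma centred_starP (T : choiceType) n (S X : {fset T}) : #|` S| = n.-1 -> (0 < n)%N ->
  centred_star n S X <-> exists2 x, x \notin S & X = x |` S.
Proof.
move=> Sn n_gt0; split=> [[Xn SX]|[x xS ->]]; last first.
  by split; [rewrite cardfsU1 xS Sn; lia|exact: fsubsetU1].
have /cardfs1P[x XS] : #|` X `\` S| == 1 by rewrite cardfsDS // Xn Sn; apply/eqP; lia.
have /fsetDP[xX xS] : x \in X `\` S by rewrite XS fset11.
exists x => //; apply/fsetP => w; rewrite in_fset1U.
case: (boolP (w \in S)) => [/(fsubsetP SX) -> | wS]; first by rewrite orbT.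
by rewrite orbF -in_fset1 -XS inE wS.
Qed.

Section CentredStarIsFlower.
Variable T : choiceType.
Hypothesis Tinf : infinite_set [set: T].
Variables (k a b : nat) (S : {fset T}).
Hypotheses (k_gt0 : (0 < k)%N) (ka : (k < a)%N) (kb : (k < b)%N).
Hypothesis Sa : #|` S| = a.-1.

Local Notation star := (centred_star a S).
Local Notation star_adj_exactly := (adj_exactly (@nsubset T b) (@gadj T k) star).

Let starP X : star X <-> exists2 x, x \notin S & X = x |` S.
Proof. by apply: centred_starP => //; lia. Qed.

Let star_adj x Y : x \notin S -> gadj k (x |` S) Y = (k <= (x \in Y) + #|` S `&` Y|)%N.
Proof. by move=> xS; rewrite /gadj card_fsetU1I. Qed.

Lemma centred_star_infinite : infinite_set star.
Proof.
by apply: (infinite_fsetU1 Tinf (C := S) (finite_set0 T)) => z zS _; apply/starP; exists z.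
Qed.

Lemma centred_star_adj_count Y : nsubset b Y ->
  [set X | star X /\ gadj k X Y] #= `I_((b - k).+1) \/
  (forall X, star X -> gadj k X Y) \/ (forall X, star X -> ~ gadj k X Y).
Proof.
move=> Yb; have [kSY|SYk] := leqP k #|` S `&` Y|.
  by right; left => _ /starP[x xS ->]; rewrite star_adj //; lia.
have [SYk1|SYk1] := eqVneq #|` S `&` Y| k.-1; last first.
  by right; right => _ /starP[x xS ->]; rewrite star_adj //; case: (x \in Y) => /=; lia.
left; have -> : [set X | star X /\ gadj k X Y] = image [set` Y `\` S] (fun x => x |` S).
  apply/seteqP; split => [_ [/starP[x xS ->]]|_ [x /= /fsetDP[xY xS] <-]].
    by rewrite star_adj // => adjY; exists x => //=; apply/fsetDP; split => //; lia.
  by split; [apply/starP; exists x|rewrite star_adj // xY; lia].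
apply: card_eq_trans (inj_card_eq _) _.
  by move=> x y /set_mem/fsetDP[_ xS] _; apply: fsetU1_injl.
by apply/card_eq_fsetP; rewrite cardfsD fsetIC SYk1 Yb; lia.
Qed.

Lemma centred_star_adj_exactly_finite (B : {fset {fset T}}) :
  ([set` B] `<=` star)%classic -> B != fset0 -> finite_set (star_adj_exactly [set` B]).
Proof.
move=> Bstar /fset0Pn[X0 X0B].
pose U := S `|` \bigcup_(X <- B) X.
apply: (sub_finite_set _ (finite_fset (fpowerset U))) => Y [_ [adjB nadj]].
have [x0 x0S X0E] := (starP X0).1 (Bstar X0 X0B).
have SYk : (k.-1 <= #|` S `&` Y|)%N.
  by have := adjB X0 X0B; rewrite X0E star_adj //; case: (x0 \in Y) => /=; lia.
rewrite /= fpowersetE; apply/fsubsetP => w wY; rewrite in_fsetU.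
case: (boolP (w \in S)) => //= wS.
have wSB : w |` S \in B.
  apply: contrapT => wSB; apply: (nadj (w |` S)) => //; first by apply/starP; exists w.
  by rewrite star_adj // wY; lia.
by apply/bigfcupP; exists (w |` S); rewrite ?wSB ?fsetU11.
Qed.

(* The witness consists of k-1 points of the centre together with the petals of [B]. *)
Lemma centred_star_adj_exactly_witness (B : {fset {fset T}}) :
  ([set` B] `<=` star)%classic -> #|` B| = (b - k).+1 -> star_adj_exactly [set` B] !=set0.
Proof.
move=> Bstar Bn; pose P := (\bigcup_(X <- B) X) `\` S.
have PS x : x \in P -> x \notin S by case/fsetDP.
have PB x : x \notin S -> (x \in P) = (x |` S \in B).
  move=> xS; apply/idP/idP => [/fsetDP[/bigfcupP[X /andP[XB _] xX] _]|xSB].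
    have [y _ XE] := (starP X).1 (Bstar X XB).
    by move: xX XB; rewrite XE in_fset1U (negbTE xS) orbF => /eqP ->.
  by apply/fsetDP; split => //; apply/bigfcupP; exists (x |` S); rewrite ?xSB ?fsetU11.
have Pn : #|` P| = (b - k).+1.
  have /eqP <- : #|` [fset x |` S | x in P]| == #|` P|.
    by apply/card_in_imfsetP => x y xP _; apply/fsetU1_injl/PS.
  rewrite -Bn; congr #|` _|; apply/fsetP => X.
  apply/imfsetP/idP => [[x /= xP ->]|XB]; first by rewrite -PB ?PS.
  by have [x xS XE] := (starP X).1 (Bstar X XB); exists x; rewrite //= PB -?XE.
have [S0 S0S S0n] : exists2 S0, S0 `<=` S & #|` S0| = k.-1.
  by apply: exists_fsubset_card; rewrite Sa; lia.
have S0P : S0 `&` P = fset0.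
  apply/fsetP => w; rewrite in_fsetI in_fset0; apply/negP => /andP[/(fsubsetP S0S) wS wP].
  by move: (PS w wP); rewrite wS.
have SY : S `&` (S0 `|` P) = S0.
  apply/fsetP => w; rewrite in_fsetI in_fsetU.
  case: (boolP (w \in S0)) => [/(fsubsetP S0S) -> //|_].
  by case: (boolP (w \in P)) => [wP | _]; rewrite ?(negbTE (PS w wP)) ?andbF.
have adjE x : x \notin S -> gadj k (x |` S) (S0 `|` P) <-> x |` S \in B.
  move=> xS; rewrite star_adj // SY S0n in_fsetU PB //.
  have -> : (x \in S0) = false by apply: contraNF xS => /(fsubsetP S0S).
  by case: (x |` S \in B); split => //=; lia.
exists (S0 `|` P); split; first by rewrite /nsubset /= cardfsU S0P cardfs0 S0n Pn; lia.
split => [X XB|X /starP[x xS ->] XB]; last by move/(adjE x xS).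
by have [x xS XE] := (starP X).1 (Bstar X XB); rewrite XE; apply/adjE; rewrite -?XE.
Qed.

Lemma centred_star_common_adj_infinite :
  infinite_set [set Y | nsubset b Y /\ forall X, star X -> gadj k X Y].
Proof.
have [S1 S1S S1k] : exists2 S1, S1 `<=` S & #|` S1| = k.
  by apply: exists_fsubset_card; rewrite Sa; lia.
have [W [SW Wn] _] := fresh_fset_disjoint Tinf (b - k).-1 S (finite_set0 _).
have S1W := disjoint_fsetI0 (fdisjointWl S1S SW).
apply: (infinite_fsetU1 Tinf (C := S1 `|` W) (finite_fset S)) => z zC zS; split.
  by rewrite /nsubset /= cardfsU1 zC cardfsU S1W cardfs0 S1k Wn; lia.
move=> X [_ SX]; rewrite /gadj -{1}S1k; apply: fsubset_leq_card.
by apply/fsubsetP => w wS1; rewrite !inE (fsubsetP SX _ (fsubsetP S1S _ wS1)) wS1 orbT.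
Qed.

Lemma centred_star_flower :
  is_flower (@nsubset T a) (@nsubset T b) (@gadj T k) (b - k) star.
Proof.
split; first by move=> X [].
split; first exact: centred_star_infinite.
split; first exact: centred_star_adj_count.
split; last exact: centred_star_common_adj_infinite.
move=> B' Bstar /card_eq_fset[B BE Bn]; subst B'; split.
  by apply: centred_star_adj_exactly_finite => //; rewrite -cardfs_gt0 Bn.
exact: centred_star_adj_exactly_witness.
Qed.

End CentredStarIsFlower.

Definition members_thru (T : choiceType) (A : set {fset T}) (x : T) : set {fset T} :=
  [set X | A X /\ x \in X].

Definition members_hitting (T : choiceType) (A : set {fset T}) (Z : {fset T}) :
  set {fset T} := [set X | A X /\ ~~ fdisjoint X Z].

Section FlowerIsCentredStar.
Variable T : choiceType.
Hypothesis Tinf : infinite_set [set: T].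
Variables (k a b l : nat) (A : set {fset T}).
Hypothesis kb : (k < b)%N.
Hypothesis Ainf : infinite_set A.
Hypothesis F1 : forall Y, nsubset b Y ->
  [set X | A X /\ gadj k X Y] #= `I_(l.+1) \/
  (forall X, A X -> gadj k X Y) \/ (forall X, A X -> ~ gadj k X Y).
Hypothesis F3 : infinite_set [set Y | nsubset b Y /\ forall X, A X -> gadj k X Y].

Lemma flower_adj_all Y : nsubset b Y ->
  infinite_set [set X | A X /\ gadj k X Y] -> forall X, A X -> gadj k X Y.
Proof.
move=> Yb Yinf; have [X0 [AX0 X0Y]] := infinite_setN0 Yinf.
have [Yfin|[//|nadj]] := F1 Yb; first by case: Yinf; exists l.+1.
by case: (nadj X0 AX0).
Qed.

Lemma flower_adj_count Y X1 X2 : nsubset b Y ->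
  A X1 -> gadj k X1 Y -> A X2 -> ~ gadj k X2 Y ->
  [set X | A X /\ gadj k X Y] #= `I_(l.+1).
Proof.
move=> Yb AX1 X1Y AX2 X2Y.
by have [//|[/(_ X2 AX2)|/(_ X1 AX1)]] := F1 Yb.
Qed.

Lemma flower_meet_fsetD1 (C : {fset T}) : (k < #|` C|)%N -> (#|` C| <= b)%N ->
  (forall X, A X -> (k <= #|` X `&` C|)%N) ->
  exists2 y, y \in C & forall X, A X -> (k <= #|` X `&` (C `\ y)|)%N.
Proof.
move=> kC Cb AC; have [y yC Ginf] := infinite_meet_fsetD1 Ainf AC kC.
exists y => // X1 AX1; apply: contraT; rewrite -ltnNge => X1C.
have [W [CW Wn] X1W] :=
  fresh_fset_disjoint Tinf (b - #|` C `\ y|) (C `\ y) (finite_set1 X1).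
have Yb : nsubset b (C `\ y `|` W).
  rewrite /nsubset /= cardfsU (disjoint_fsetI0 CW) cardfs0 Wn.
  by rewrite (cardfsD1 y C) yC in Cb *; lia.
have Yinf : infinite_set [set X | A X /\ gadj k X (C `\ y `|` W)].
  apply: sub_infinite_set Ginf => X [AX kX]; split => //.
  by apply: leq_trans kX (fsubset_leq_card _); rewrite fsetIUr fsubsetUl.
have := flower_adj_all Yb Yinf AX1.
by rewrite /gadj fsetIUr (disjoint_fsetI0 (X1W X1 erefl)) fsetU0 leqNgt X1C.
Qed.

Lemma flower_common_fsubset :
  exists2 D : {fset T}, #|` D| = k & forall X, A X -> D `<=` X.
Proof.
have [Y0 [Y0b Y0A]] := infinite_setN0 F3.
have shrink n : (n <= b - k)%N -> exists2 C : {fset T}, #|` C| = (b - n)%N &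
    forall X, A X -> (k <= #|` X `&` C|)%N.
  elim: n => [_|n IHn le_n]; first by exists Y0; rewrite ?subn0.
  have [C Cn AC] := IHn (ltnW le_n).
  have kC : (k < #|` C|)%N by rewrite Cn; lia.
  have Cb : (#|` C| <= b)%N by rewrite Cn leq_subr.
  have [y yC AC'] := flower_meet_fsetD1 kC Cb AC.
  by exists (C `\ y) => //; move: Cn; rewrite (cardfsD1 y C) yC; lia.
have [D Dn AD] := shrink (b - k)%N (leqnn _).
have Dk : #|` D| = k by rewrite Dn; lia.
exists D => // X AX; have DX := fsubsetIr X D.
have /eqP <- : X `&` D == D.
  by rewrite -(fsubset_leqif_cards DX) eqn_leq fsubset_leq_card // Dk AD.
exact: fsubsetIl.
Qed.

Lemma flower_core : exists K : {fset T}, [/\ (k <= #|` K|)%N,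
  forall X, A X -> K `<=` X & forall x, x \notin K -> exists2 X, A X & x \notin X].
Proof.
have [D Dk AD] := flower_common_fsubset.
have [X0 AX0] := infinite_setN0 Ainf.
exists [fset x in X0 | `[< forall X, A X -> x \in X >]]; split.
- rewrite -Dk; apply/fsubset_leq_card/fsubsetP => x xD.
  by rewrite !inE (fsubsetP (AD X0 AX0)) //=; apply/asboolP => X /AD/fsubsetP->.
- by move=> X AX; apply/fsubsetP => x; rewrite !inE => /andP[_ /asboolP->].
move=> x; rewrite !inE => /nandP[xX0|/asboolP]; first by exists X0.
by move=> /existsNP[X /not_implyP[AX /negP xX]]; exists X.
Qed.

Section Core.
Hypothesis k_gt0 : (0 < k)%N.
Hypothesis Aa : (A `<=` @nsubset T a)%classic.
Variables (K K0 : {fset T}).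
Hypothesis AK : forall X, A X -> K `<=` X.
Hypothesis Kmin : forall x, x \notin K -> exists2 X, A X & x \notin X.
Hypothesis K0K : K0 `<=` K.
Hypothesis K0k : #|` K0| = k.-1.

Local Notation thru := (members_thru A).
Local Notation hitting := (members_hitting A).

Lemma core_adj (X Z : {fset T}) : A X -> fdisjoint K Z ->
  gadj k X (K0 `|` Z) <-> ~~ fdisjoint X Z.
Proof.
move=> AX KZ; have K0X := fsubset_trans K0K (AK AX).
have K0XZ : fdisjoint K0 (X `&` Z).
  by apply: fdisjointWl K0K (fdisjointWr (fsubsetIr _ _) KZ).
rewrite /gadj fsetIUr (fsetIidPr K0X) cardfsU (disjoint_fsetI0 K0XZ) cardfs0 subn0 K0k.
rewrite -fsetI_eq0 -cardfs_eq0; split => [|/negPf]; [|case: (#|` X `&` Z|) => //]; lia.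
Qed.

Lemma core_nsubset (Z : {fset T}) :
  fdisjoint K Z -> #|` Z| = (b - k).+1 -> nsubset b (K0 `|` Z).
Proof.
move=> KZ Zn; have K0Z := fdisjointWl K0K KZ.
by rewrite /nsubset /= cardfsU (disjoint_fsetI0 K0Z) cardfs0 K0k Zn; lia.
Qed.

Lemma members_thru_finite x : x \notin K -> finite_set (thru x).
Proof.
move=> xK; have [X' AX' xX'] := Kmin xK.
have [W [xKW Wn] X'W] := fresh_fset_disjoint Tinf (b - k) (x |` K) (finite_set1 X').
move: xKW; rewrite fdisjointU1X => /andP[xW KW].
have KZ : fdisjoint K (x |` W) by rewrite fdisjointXU fdisjointX1 xK KW.
have Yb : nsubset b (K0 `|` (x |` W)) by apply: core_nsubset; rewrite // cardfsU1 xW Wn.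
have adj_thru X : thru x X -> gadj k X (K0 `|` (x |` W)).
  by case=> AX xX; apply/core_adj => //; rewrite fdisjointXU fdisjointX1 xX.
have X'_nadj : ~ gadj k X' (K0 `|` (x |` W)).
  by move/(core_adj AX' KZ); rewrite fdisjointXU fdisjointX1 xX' X'W.
have [Yfin|[/(_ X' AX')//|nadj]] := F1 Yb.
  by apply: sub_finite_set (ex_intro _ l.+1 Yfin) => X /[dup] [[AX _]] /adj_thru.
by apply: sub_finite_set (finite_set0 _) => X /[dup] [[AX _]] /adj_thru /(nadj X AX).
Qed.

Lemma members_hitting_fsetU1 x (Z : {fset T}) :
  hitting (x |` Z) = (thru x `|` hitting Z)%classic.
Proof.
rewrite /members_hitting /members_thru; apply/seteqP; split => X /=;
  rewrite fdisjointXU fdisjointX1 negb_and negbK.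
  by move=> [AX /orP[xX|XZ]]; [left|right].
by move=> [[AX ->]|[AX ->]]; rewrite ?orbT.
Qed.

Lemma members_hitting_finite (Z : {fset T}) : fdisjoint K Z -> finite_set (hitting Z).
Proof.
move=> KZ; apply: (sub_finite_set (B := bigcup [set` Z] thru)).
  move=> X [AX /negP XZ]; apply: contrapT => nZ; apply/XZ/fdisjointP => z zX.
  by apply/negP => zZ; apply: nZ; exists z.
apply: bigcup_finite => // z zZ; apply: members_thru_finite.
by move: KZ => /fdisjointP_sym; apply.
Qed.

Lemma members_hitting_count (Z X1 : {fset T}) : fdisjoint K Z -> #|` Z| = (b - k).+1 ->
  A X1 -> ~~ fdisjoint X1 Z -> hitting Z #= `I_(l.+1).
Proof.
move=> KZ Zn AX1 X1Z; have Yb := core_nsubset KZ Zn.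
have [X2 [AX2 X2Z]] := infinite_setN0 (infinite_setD Ainf (members_hitting_finite KZ)).
have -> : hitting Z = [set X | A X /\ gadj k X (K0 `|` Z)].
  by apply/seteqP; split => X [AX XZ]; split => //; apply/(core_adj AX KZ).
apply: (flower_adj_count Yb AX1 _ AX2); first exact/(core_adj AX1 KZ).
by move/(core_adj AX2 KZ) => X2Z'; apply: X2Z.
Qed.

Lemma core_card_fsetD X : A X -> #|` X `\` K| = (a - #|` K|)%N.
Proof. by move=> AX; rewrite cardfsDS ?AK // (Aa AX). Qed.

Lemma core_lt : (#|` K| < a)%N.
Proof.
rewrite ltnNge; apply/negP => aK; apply/Ainf/(sub_finite_set _ (finite_set1 K)) => X AX.
have KX := AK AX; apply/esym/eqP.
by rewrite -(fsubset_leqif_cards KX) eqn_leq fsubset_leq_card // (Aa AX).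
Qed.

Lemma exists_outside_core X : A X -> exists2 x, x \in X & x \notin K.
Proof.
move=> AX; have /fset0Pn[x /fsetDP[]] : X `\` K != fset0.
  by rewrite -cardfs_gt0 core_card_fsetD // subn_gt0 core_lt.
by exists x.
Qed.

Lemma exists_far_point (M : set {fset T}) : finite_set M ->
  exists x, [/\ x \notin K, thru x !=set0 & forall X, thru x X -> ~ M X].
Proof.
move=> Mfin; pose F := bigcup M (fun X => [set` X]).
have Ffin : finite_set F by apply: bigcup_finite.
pose N := bigcup (F `\` [set` K])%classic thru.
have Nfin : finite_set N.
  by apply: bigcup_finite => [|w [_ /negP]]; [exact: finite_setD|exact: members_thru_finite].
have [X2 [AX2 X2N]] := infinite_setN0 (infinite_setD Ainf Nfin).
have [x xX2 xK] := exists_outside_core AX2.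
exists x; split => //; first by exists X2.
by move=> X [AX xX] MX; apply: X2N; exists x => //; split; [exists X|apply/negP].
Qed.

Lemma members_thru_pair_count p q (W : {fset T}) : p \notin K -> q \notin K -> p != q ->
  thru p !=set0 -> thru q !=set0 -> fdisjoint K W -> #|` W| = (b - k).-1 ->
  (forall X, thru p X \/ thru q X -> fdisjoint X W) ->
  (#|` fset_set (thru p) `|` fset_set (thru q)| + #|` fset_set (hitting W)|)%N = l.+1.
Proof.
move=> pK qK pq [Xp thru_p] [Xq thru_q] KW Wn far.
have pW : p \notin W by move/fdisjointP: (far Xp (or_introl thru_p)); apply; case: thru_p.
have qW : q \notin W by move/fdisjointP: (far Xq (or_intror thru_q)); apply; case: thru_q.
have KZ : fdisjoint K (p |` (q |` W)) by rewrite !fdisjointXU !fdisjointX1 pK qK KW.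
have Zn : #|` p |` (q |` W)| = (b - k).+1.
  by rewrite !cardfsU1 in_fset1U negb_or pq pW qW Wn /= !add1n prednK // subn_gt0.
have Xp_hit : ~~ fdisjoint Xp (p |` (q |` W)).
  by rewrite fdisjointXU fdisjointX1 negb_and negbK thru_p.2.
have := members_hitting_count KZ Zn thru_p.1 Xp_hit.
rewrite !members_hitting_fsetU1 setUA => /card_fset_set <-.
have fW := members_hitting_finite KW.
have [fp fq] := (members_thru_finite pK, members_thru_finite qK).
have fpq : finite_set (thru p `|` thru q)%classic by rewrite finite_setU.
rewrite (fset_setU fpq fW) (fset_setU fp fq) [RHS]cardfsU.
suff -> : (fset_set (thru p) `|` fset_set (thru q)) `&` fset_set (hitting W) = fset0.
  by rewrite cardfs0 subn0.
apply/fsetP => X; rewrite in_fsetI in_fsetU (in_fset_set fp) (in_fset_set fq).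
rewrite (in_fset_set fW) in_fset0; apply/negP => /andP[pqX /set_mem[_]].
by rewrite far //; case/orP: pqX => /set_mem; [left|right].
Qed.

(* If [#|K| < a.-1], take [q] outside [K] lying in the fewest members, [p != q] in a common
   member, and [e] lying in no member through [p] or [q]. Counting the members hitting
   [p |` (q |` W)] and [p |` (e |` W)] for a far [W] gives
   [#|thru p `|` thru q| = #|thru p `|` thru e|], which [card_fsetU_lt] forbids. *)
Lemma core_card : #|` K| = a.-1.
Proof.
suff : ~ (#|` K| < a.-1)%N by have := core_lt; lia.
move=> Ksmall; pose deg x := #|` fset_set (thru x)|.
have degP : exists n, `[< exists x, [/\ x \notin K, thru x !=set0 & deg x = n] >].
  have [X0 AX0] := infinite_setN0 Ainf; have [x xX0 xK] := exists_outside_core AX0.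
  by exists (deg x); apply/asboolP; exists x; split => //; exists X0.
case: (ex_minnP degP) => _ /asboolP[q [qK [X1 [AX1 qX1]] <-]] deg_min.
have [p /fsetDP[pX1 pK] pq] : exists2 p, p \in X1 `\` K & p != q.
  have /fset0Pn[p /fsetD1P[pq pX1K]] : (X1 `\` K) `\ q != fset0.
    by rewrite -cardfs_gt0; move: (cardfsD1 q (X1 `\` K)); rewrite core_card_fsetD //; lia.
  by exists p.
have [fp fq] := (members_thru_finite pK, members_thru_finite qK).
have [e [eK [X2 thru_e] far_e]] : exists e, [/\ e \notin K, thru e !=set0 &
    forall X, thru e X -> ~ (thru p `|` thru q)%classic X].
  by apply: exists_far_point; rewrite finite_setU.
have fe := members_thru_finite eK.
have pe : p != e by apply/eqP => pe; apply: (far_e X1); [rewrite -pe|left].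
have fpqe : finite_set (thru p `|` thru q `|` thru e)%classic by rewrite !finite_setU.
have [W [KW Wn] far_W] := fresh_fset_disjoint Tinf (b - k).-1 K fpqe.
have thru_p : thru p !=set0 by exists X1.
have far_pq X : thru p X \/ thru q X -> fdisjoint X W by move=> pqX; apply: far_W; left.
have far_pe X : thru p X \/ thru e X -> fdisjoint X W.
  by case=> [pX|eX]; apply: far_W; [left; left|right].
have thru_q : thru q !=set0 by exists X1.
have Cpq := members_thru_pair_count pK qK pq thru_p thru_q KW Wn far_pq.
have Cpe := members_thru_pair_count pK eK pe thru_p (ex_intro _ X2 thru_e) KW Wn far_pe.
have pq_meet : fset_set (thru p) `&` fset_set (thru q) != fset0.
  apply/fset0Pn; exists X1.
  by rewrite in_fsetI (in_fset_set fp) (in_fset_set fq); apply/andP; split; apply/mem_set.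
have pe_disj : fset_set (thru p) `&` fset_set (thru e) = fset0.
  apply/fsetP => X; rewrite in_fsetI (in_fset_set fp) (in_fset_set fe) in_fset0.
  by apply/negP => /andP[/set_mem pX /set_mem eX]; apply: (far_e X eX); left.
have deg_qe : (deg q <= deg e)%N.
  by apply: deg_min; apply/asboolP; exists e; split => //; exists X2.
have := card_fsetU_lt pq_meet pe_disj deg_qe.
by move/eqP: Cpq; rewrite -Cpe eqn_add2r => /eqP ->; rewrite ltnn.
Qed.

Section CardCore.
Hypothesis Ka : #|` K| = a.-1.

Let starP X : centred_star a K X <-> exists2 x, x \notin K & X = x |` K.
Proof. by apply: centred_starP => //; have := core_lt; lia. Qed.

Let memberP X : A X -> exists2 x, x \notin K & X = x |` K.
Proof. by move=> AX; apply/starP; split; [exact: Aa|exact: AK]. Qed.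

Lemma members_hitting_card_eq (Z : {fset T}) : fdisjoint K Z ->
  hitting Z #= [set x | x \in Z /\ A (x |` K)].
Proof.
move=> KZ; suff -> : hitting Z = image [set x | x \in Z /\ A (x |` K)] (fun x => x |` K).
  apply: inj_card_eq => x y /set_mem[xZ _] _; apply: fsetU1_injl.
  by move/fdisjointP_sym: KZ; apply.
apply/seteqP; split => [X [AX]|_ [x [xZ AxK] <-]].
  have [x xK XE] := memberP AX; subst X.
  by rewrite fdisjointU1X KZ andbT negbK => xZ; exists x.
by split => //; rewrite fdisjointU1X negb_and xZ.
Qed.

Lemma members_hitting_petals_card (Z P : {fset T}) :
  fdisjoint K Z -> #|` Z| = (b - k).+1 -> P `<=` Z -> P != fset0 ->
  (forall x, x \in Z -> A (x |` K) <-> x \in P) -> #|` P| = l.+1.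
Proof.
move=> KZ Zn PZ /fset0Pn[v vP] ZP; have vZ := fsubsetP PZ v vP.
have AvK : A (v |` K) by apply/(ZP v vZ).
have vZhit : ~~ fdisjoint (v |` K) Z by rewrite fdisjointU1X negb_and vZ.
have hitZ := members_hitting_count KZ Zn AvK vZhit.
have SP : [set x | x \in Z /\ A (x |` K)] = [set` P].
  apply/seteqP; split => [x [xZ /(ZP x xZ)] //|x xP].
  by split; [exact: (fsubsetP PZ)|apply/(ZP x (fsubsetP PZ x xP))].
have := card_eq_trans (card_esym hitZ) (members_hitting_card_eq KZ).
by rewrite SP card_eq_sym => /card_eq_fsetP.
Qed.

Lemma flower_petals : exists2 V : {fset T}, #|` V| = (b - k).+1 &
  forall v, v \in V -> v \notin K /\ A (v |` K).
Proof.
pose petal := [set x | x \notin K /\ A (x |` K)].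
suff /(infinite_set_fset_card (b - k).+1)[V Vpetal Vn] : infinite_set petal by exists V.
apply: contra_not Ainf => petal_fin.
apply: (sub_finite_set _ (finite_image (fun x => x |` K) petal_fin)).
by move=> X /[dup] AX /memberP[x xK XE]; exists x => //; split; rewrite // -XE.
Qed.

Lemma flower_l_eq : l = (b - k)%N.
Proof.
have [V Vn Vpetal] := flower_petals.
have KV : fdisjoint K V by apply/fdisjointP_sym => v /Vpetal[].
have V0 : V != fset0 by rewrite -cardfs_gt0 Vn.
apply/eqP; rewrite -eqSS -Vn; apply/eqP/esym/(members_hitting_petals_card KV Vn) => //.
by move=> x xV; split => // _; case: (Vpetal x xV).
Qed.

Lemma flower_centred_star : A = centred_star a K.
Proof.
apply/seteqP; split => [X AX|_ /starP[x xK ->]]; first by split; [exact: Aa|exact: AK].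
apply: contrapT => AxK; have [V Vn Vpetal] := flower_petals.
have /fset0Pn[v0 v0V] : V != fset0 by rewrite -cardfs_gt0 Vn.
pose V' := V `\ v0; have V'V : V' `<=` V := fsubD1set V v0.
have xV' : x \notin V' by apply/negP => /(fsubsetP V'V)/Vpetal[].
have V'n : #|` V'| = (b - k)%N by move: Vn; rewrite (cardfsD1 v0) v0V => -[].
have V'0 : V' != fset0 by rewrite -cardfs_gt0 V'n subn_gt0.
have KZ : fdisjoint K (x |` V').
  by rewrite fdisjointXU fdisjointX1 xK; apply/fdisjointP_sym => v /(fsubsetP V'V)/Vpetal[].
have Zn : #|` x |` V'| = (b - k).+1 by rewrite cardfsU1 xV' V'n.
have ZP y : y \in x |` V' -> A (y |` K) <-> y \in V'.
  rewrite in_fset1U => /orP[/eqP ->|yV']; first by split => [/AxK|x_V'] //; rewrite x_V' in xV'.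
  by split => // _; case: (Vpetal y (fsubsetP V'V y yV')).
have := members_hitting_petals_card KZ Zn (fsubsetU1 x V') V'0 ZP.
by rewrite V'n flower_l_eq => /n_Sn.
Qed.

End CardCore.
End Core.
End FlowerIsCentredStar.

Lemma flower_is_regular_star (T : choiceType) (k a b l : nat) (A : set {fset T}) :
  infinite_set [set: T] -> (0 < k)%N -> (k < b)%N ->
  is_flower (@nsubset T a) (@nsubset T b) (@gadj T k) l A ->
  regular_star a A /\ l = (b - k)%N.
Proof.
move=> Tinf k_gt0 kb [Aa [Ainf [F1 [_ F3]]]].
have [K [kK AK Kmin]] := flower_core Tinf kb Ainf F1 F3.
have [K0 K0K K0k] := exists_fsubset_card (leq_trans (leq_pred k) kK).
have Ka := core_card Tinf kb Ainf F1 k_gt0 Aa AK Kmin K0K K0k.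
have l_eq := flower_l_eq Tinf kb Ainf F1 k_gt0 Aa AK Kmin K0K K0k Ka.
have A_eq := flower_centred_star Tinf kb Ainf F1 k_gt0 Aa AK Kmin K0K K0k Ka.
by split => //; exists K.
Qed.

Lemma regular_star_is_flower (T : choiceType) (k a b : nat) (A : set {fset T}) :
  infinite_set [set: T] -> (0 < k)%N -> (k < a)%N -> (k < b)%N -> regular_star a A ->
  is_flower (@nsubset T a) (@nsubset T b) (@gadj T k) (b - k) A.
Proof. by move=> Tinf k_gt0 ka kb [S [Sa ->]]; exact: centred_star_flower. Qed.

Lemma gadj_sym (T : choiceType) k : (fun Y X => @gadj T k X Y) = @gadj T k.
Proof. by apply/funext => Y; apply/funext => X; rewrite /gadj fsetIC. Qed.

Theorem proposition4p6 (Omega : choiceType) (i j k : nat) :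
  infinite_set [set: Omega] -> (1 <= k)%N -> (k < i)%N -> (i <= j)%N ->
  (* every l-flower is a regular star, with the stated value of l *)
  (forall l : nat, (0 < l)%N ->
     (forall A : set {fset Omega},
        is_flower (@nsubset Omega i) (@nsubset Omega j) (@gadj Omega k) l A ->
        regular_star i A /\ l = (j - k)%N) /\
     (forall A : set {fset Omega},
        is_flower (@nsubset Omega j) (@nsubset Omega i)
          (fun Y X => @gadj Omega k X Y) l A ->
        regular_star j A /\ l = (i - k)%N)) /\
  (* every j-regular star is an (i-k)-flower *)
  (forall A : set {fset Omega}, regular_star j A ->
     is_flower (@nsubset Omega j) (@nsubset Omega i)
       (fun Y X => @gadj Omega k X Y) (i - k)%N A) /\
  (* every i-regular star is a (j-k)-flower *)
  (forall A : set {fset Omega}, regular_star i A ->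
     is_flower (@nsubset Omega i) (@nsubset Omega j) (@gadj Omega k) (j - k)%N A) /\
  (* no l-star in either bipart *)
  (forall l : nat, (0 < l)%N ->
     (forall A : set {fset Omega},
        ~ is_star (@nsubset Omega i) (@nsubset Omega j) (@gadj Omega k) l A) /\
     (forall A : set {fset Omega},
        ~ is_star (@nsubset Omega j) (@nsubset Omega i)
            (fun Y X => @gadj Omega k X Y) l A)).
Proof.
move=> Tinf k_gt0 ki ij; have kj : (k < j)%N by apply: leq_trans ij.
rewrite gadj_sym; split; last split; last split.
- by move=> l _; split=> A; apply: flower_is_regular_star.
- by move=> A; apply: regular_star_is_flower.
- by move=> A; apply: regular_star_is_flower.
- by move=> l _; split=> A; apply: no_star.
Qed.
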